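(* The function $\mathcal{O}:(0,\infty)^3\to\mathbb{R}$ is locally Lipschitz continuous on $(0,\infty)^3$.
   Context: For $(b_1,b_2,\beta)\in(0,\infty)^3$, $\mathcal{O}(b_1,b_2,\beta)=\inf\Big\{\frac{\int_{\mathbb{R}^2}(|\nabla u_1|^2+|\nabla u_2|^2)dx}{\frac{b_1}{2}\int|u_1|^4dx+\frac{b_2}{2}\int|u_2|^4dx+\beta\int|u_1|^2|u_2|^2dx}: u_i\in H^1(\mathbb{R}^2),\ \|u_i\|_2=1,\ i=1,2\Big\}$. *)

From HB Require Import structures.
From mathcomp Require Import all_boot all_order all_algebra.
From mathcomp Require Import all_classical all_reals all_analysis.
Set Implicit Arguments. Unset Strict Implicit. Unset Printing Implicit Defensive.
Import Order.TTheory GRing.Theory Num.Theory.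
Import numFieldNormedType.Exports.
Local Open Scope classical_set_scope.
Local Open Scope ring_scope.

Section Sobolev.
Variable R : realType.

Definition leb2 := ((@lebesgue_measure R) \x (@lebesgue_measure R))%E.

Definition dir (b : bool) : R * R := if b then (1, 0) else (0, 1).

Fixpoint iterD (s : seq bool) (f : R * R -> R) : R * R -> R :=
  match s with
  | [::] => f
  | b :: s' => 'D_(dir b) (iterD s' f)
  end.

Definition smooth (f : R * R -> R) : Prop :=
  forall s : seq bool, continuous (iterD s f) /\
    forall (b : bool) (p : R * R), derivable (iterD s f) p (dir b).

Definition test_fun (phi : R * R -> R) : Prop :=
  smooth phi /\ exists M : R, forall p : R * R, M < `|p| -> phi p = 0.

Definition L2 (f : R * R -> R) : Prop :=
  measurable_fun setT f /\ leb2.-integrable setT (fun x => ((f x) ^+ 2)%:E).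

Definition weak_grad (f g1 g2 : R * R -> R) : Prop :=
  forall phi, test_fun phi ->
    (\int[leb2]_x (f x * 'D_(dir true) phi x)%:E
       = - \int[leb2]_x (g1 x * phi x)%:E)%E /\
    (\int[leb2]_x (f x * 'D_(dir false) phi x)%:E
       = - \int[leb2]_x (g2 x * phi x)%:E)%E.

Definition H1_grad (f g1 g2 : R * R -> R) : Prop :=
  L2 f /\ L2 g1 /\ L2 g2 /\ weak_grad f g1 g2.

(* A complex-valued u = a + i c lies in H^1(R^2; C) iff a and c do.
   |u|^2 = a^2 + c^2,  |grad u|^2 = |grad a|^2 + |grad c|^2.
   The set of Rayleigh quotients defining O(b1,b2,beta). *)
Definition quotients (b1 b2 beta : R) : set R :=
  [set q | exists (a1 c1 a2 c2 : R * R -> R)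
              (ga1 ha1 gc1 hc1 ga2 ha2 gc2 hc2 : R * R -> R),
     H1_grad a1 ga1 ha1 /\ H1_grad c1 gc1 hc1 /\
         H1_grad a2 ga2 ha2 /\ H1_grad c2 gc2 hc2 /\
         (\int[leb2]_x ((a1 x) ^+ 2 + (c1 x) ^+ 2)%:E = 1)%E /\
         (\int[leb2]_x ((a2 x) ^+ 2 + (c2 x) ^+ 2)%:E = 1)%E /\
         q = Rintegral leb2 setT (fun x =>
                (ga1 x) ^+ 2 + (ha1 x) ^+ 2 + (gc1 x) ^+ 2 + (hc1 x) ^+ 2
              + (ga2 x) ^+ 2 + (ha2 x) ^+ 2 + (gc2 x) ^+ 2 + (hc2 x) ^+ 2)
           / (b1 / 2 * Rintegral leb2 setT (fun x => ((a1 x) ^+ 2 + (c1 x) ^+ 2) ^+ 2)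
              + b2 / 2 * Rintegral leb2 setT (fun x => ((a2 x) ^+ 2 + (c2 x) ^+ 2) ^+ 2)
              + beta * Rintegral leb2 setT (fun x =>
                   ((a1 x) ^+ 2 + (c1 x) ^+ 2) * ((a2 x) ^+ 2 + (c2 x) ^+ 2)))].

Definition Ocal (b1 b2 beta : R) : R := inf (quotients b1 b2 beta).

End Sobolev.

From HB Require Import structures.
From mathcomp Require Import all_boot all_order all_algebra.
From mathcomp Require Import all_classical all_reals all_analysis.
From mathcomp Require Import lra.
Import Order.TTheory GRing.Theory Num.Theory.
Local Open Scope classical_set_scope.
Local Open Scope ring_scope.

(* The admissible pairs (u1, u2) do not depend on b = (b1, b2, beta), which
   enters only the denominator D_b = b1/2 A1 + b2/2 A2 + beta A3, linearly and
   with nonnegative coefficients A_i.  Hence b <= c b' componentwise gives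
   D_b <= c D_b' for every admissible pair, i.e. O(b') <= c O(b).  With
   c = 1 + |b - b'| / m, where m is a lower bound for all parameters near a
   point b0, this yields |O(b) - O(b')| <= M / m * |b - b'| with M a bound for
   O near b0; on the ball of radius min(b0) / 2 one may take M = 2 O(b0), by
   the same inequality with c = 2. *)

Section LocallyLipschitz.
Variable R : realType.
Variable f : R -> R -> R -> R.

Hypothesis f_le_scale : forall x1 x2 x3 y1 y2 y3 c,
  0 < x1 -> 0 < x2 -> 0 < x3 -> 0 < y1 -> 0 < y2 -> 0 < y3 -> 0 < c ->
  x1 <= c * y1 -> x2 <= c * y2 -> x3 <= c * y3 -> f y1 y2 y3 <= c * f x1 x2 x3.

Lemma le_scale_dist (m x y d : R) :
  0 < m -> m <= x -> `|x - y| <= d -> y <= (1 + d / m) * x.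
Proof.
move=> m_gt0 mx xy.
have d_ge0 : 0 <= d := le_trans (normr_ge0 _) xy.
have : d <= d / m * x by rewrite mulrAC ler_pdivlMr // ler_wpM2l.
have := ler_norm (y - x); rewrite distrC; lra.
Qed.

Lemma f_le_dist {m x1 x2 x3 y1 y2 y3 : R} :
  0 < m -> m <= x1 -> m <= x2 -> m <= x3 -> 0 < y1 -> 0 < y2 -> 0 < y3 ->
  f x1 x2 x3 <= (1 + (`|x1 - y1| + `|x2 - y2| + `|x3 - y3|) / m) * f y1 y2 y3.
Proof.
move=> m_gt0 m1 m2 m3 y1_gt0 y2_gt0 y3_gt0.
set d := `|x1 - y1| + `|x2 - y2| + `|x3 - y3|.
have d_ge0 : 0 <= d by rewrite /d !addr_ge0.
have c_gt0 : 0 < 1 + d / m by rewrite ltr_wpDr ?divr_ge0 // ltW.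
have n1 := normr_ge0 (x1 - y1); have n2 := normr_ge0 (x2 - y2).
have n3 := normr_ge0 (x3 - y3).
apply: f_le_scale => //; try exact: lt_le_trans m_gt0 _;
  by apply: le_scale_dist => //; rewrite /d; lra.
Qed.

Lemma f_lipschitz_on_bounded (m M x1 x2 x3 y1 y2 y3 : R) :
  0 < m -> m <= x1 -> m <= x2 -> m <= x3 -> m <= y1 -> m <= y2 -> m <= y3 ->
  f x1 x2 x3 <= M -> f y1 y2 y3 <= M ->
  `|f x1 x2 x3 - f y1 y2 y3| <= M / m * (`|x1 - y1| + `|x2 - y2| + `|x3 - y3|).
Proof.
move=> m_gt0 x1m x2m x3m y1m y2m y3m fxM fyM.
have pos z : m <= z -> 0 < z by exact: lt_le_trans.
set d := `|x1 - y1| + `|x2 - y2| + `|x3 - y3|.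
have d_ge0 : 0 <= d by rewrite /d !addr_ge0.
have fxy := f_le_dist m_gt0 x1m x2m x3m (pos _ y1m) (pos _ y2m) (pos _ y3m).
have fyx := f_le_dist m_gt0 y1m y2m y3m (pos _ x1m) (pos _ x2m) (pos _ x3m).
rewrite -/d in fxy; rewrite (distrC y1) (distrC y2) (distrC y3) -/d in fyx.
clearbody d.
have dm_ge0 : 0 <= d / m by rewrite divr_ge0 // ltW.
have : d / m * f y1 y2 y3 <= d / m * M by rewrite ler_wpM2l.
have : d / m * f x1 x2 x3 <= d / m * M by rewrite ler_wpM2l.
move: fxy fyx; rewrite !mulrDl !mul1r mulrAC mulrC.
by move=> *; rewrite ler_norml; apply/andP; split; lra.
Qed.

Lemma f_locally_lipschitz (b1 b2 b3 : R) :
  0 < b1 -> 0 < b2 -> 0 < b3 ->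
  exists r : R, 0 < r /\ exists L : R,
    forall x1 x2 x3 y1 y2 y3 : R,
      0 < x1 -> 0 < x2 -> 0 < x3 -> 0 < y1 -> 0 < y2 -> 0 < y3 ->
      `|x1 - b1| < r -> `|x2 - b2| < r -> `|x3 - b3| < r ->
      `|y1 - b1| < r -> `|y2 - b2| < r -> `|y3 - b3| < r ->
      `|f x1 x2 x3 - f y1 y2 y3| <= L * (`|x1 - y1| + `|x2 - y2| + `|x3 - y3|).
Proof.
move=> b1_gt0 b2_gt0 b3_gt0.
set r := Num.min b1 (Num.min b2 b3) / 2.
have r_gt0 : 0 < r by rewrite divr_gt0 // !lt_min b1_gt0 b2_gt0 b3_gt0.
have r_le1 : r <= b1 / 2 by rewrite ler_pM2r // ge_min lexx.
have r_le2 : r <= b2 / 2 by rewrite ler_pM2r // !ge_min lexx orbT.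
have r_le3 : r <= b3 / 2 by rewrite ler_pM2r // !ge_min lexx !orbT.
have near b z : r <= b / 2 -> `|z - b| < r -> r <= z /\ b <= 2 * z.
  by move=> rb; rewrite ltr_norml => /andP[]; lra.
have f_le_center z1 z2 z3 : 0 < z1 -> 0 < z2 -> 0 < z3 ->
    `|z1 - b1| < r -> `|z2 - b2| < r -> `|z3 - b3| < r ->
    r <= z1 /\ r <= z2 /\ r <= z3 /\ f z1 z2 z3 <= 2 * f b1 b2 b3.
  move=> z1_gt0 z2_gt0 z3_gt0 /(near _ _ r_le1)[? ?] /(near _ _ r_le2)[? ?]
    /(near _ _ r_le3)[? ?].
  by do 3 split => //; apply: f_le_scale.
exists r; split => //; exists (2 * f b1 b2 b3 / r).
move=> x1 x2 x3 y1 y2 y3 x1_gt0 x2_gt0 x3_gt0 y1_gt0 y2_gt0 y3_gt0 x1b x2b x3b y1b y2b y3b.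
have [x1r [x2r [x3r fx]]] := f_le_center _ _ _ x1_gt0 x2_gt0 x3_gt0 x1b x2b x3b.
have [y1r [y2r [y3r fy]]] := f_le_center _ _ _ y1_gt0 y2_gt0 y3_gt0 y1b y2b y3b.
exact: f_lipschitz_on_bounded.
Qed.

End LocallyLipschitz.

Section RayleighQuotient.
Variable R : realType.

Definition interaction_energy (b1 b2 b3 A1 A2 A3 : R) : R :=
  b1 / 2 * A1 + b2 / 2 * A2 + b3 * A3.

Lemma interaction_energy_ge0 (b1 b2 b3 A1 A2 A3 : R) :
  0 <= b1 -> 0 <= b2 -> 0 <= b3 -> 0 <= A1 -> 0 <= A2 -> 0 <= A3 ->
  0 <= interaction_energy b1 b2 b3 A1 A2 A3.
Proof. by move=> *; rewrite !addr_ge0 ?mulr_ge0 ?divr_ge0. Qed.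

Lemma interaction_energy_le_scale (b1 b2 b3 b1' b2' b3' c A1 A2 A3 : R) :
  b1 <= c * b1' -> b2 <= c * b2' -> b3 <= c * b3' ->
  0 <= A1 -> 0 <= A2 -> 0 <= A3 ->
  interaction_energy b1 b2 b3 A1 A2 A3 <= c * interaction_energy b1' b2' b3' A1 A2 A3.
Proof.
move=> le1 le2 le3 A1_ge0 A2_ge0 A3_ge0.
have := ler_wpM2r A1_ge0 le1; have := ler_wpM2r A2_ge0 le2.
have := ler_wpM2r A3_ge0 le3; rewrite /interaction_energy; lra.
Qed.

Lemma interaction_energy_eq0 {b1 b2 b3 A1 A2 A3 : R} :
  0 < b1 -> 0 < b2 -> 0 < b3 -> 0 <= A1 -> 0 <= A2 -> 0 <= A3 ->
  interaction_energy b1 b2 b3 A1 A2 A3 = 0 -> [/\ A1 = 0, A2 = 0 & A3 = 0].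
Proof.
move=> b1_gt0 b2_gt0 b3_gt0 A1_ge0 A2_ge0 A3_ge0.
have := mulr_ge0 (ltW b1_gt0) A1_ge0; have := mulr_ge0 (ltW b2_gt0) A2_ge0.
have := mulr_ge0 (ltW b3_gt0) A3_ge0; rewrite /interaction_energy => ? ? ? E0.
have /eqP : b1 * A1 = 0 by lra.
have /eqP : b2 * A2 = 0 by lra.
have /eqP : b3 * A3 = 0 by lra.
by rewrite !mulf_eq0 (gt_eqF b1_gt0) (gt_eqF b2_gt0) (gt_eqF b3_gt0) => /eqP-> /eqP-> /eqP->.
Qed.

Lemma rayleigh_le_scale (b1 b2 b3 b1' b2' b3' c N A1 A2 A3 : R) :
  0 < b1 -> 0 < b2 -> 0 < b3 -> 0 < c ->
  b1 <= c * b1' -> b2 <= c * b2' -> b3 <= c * b3' ->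
  0 <= N -> 0 <= A1 -> 0 <= A2 -> 0 <= A3 ->
  N / interaction_energy b1' b2' b3' A1 A2 A3
    <= c * (N / interaction_energy b1 b2 b3 A1 A2 A3).
Proof.
move=> b1_gt0 b2_gt0 b3_gt0 c_gt0 le1 le2 le3 N_ge0 A1_ge0 A2_ge0 A3_ge0.
set D := interaction_energy b1 b2 b3 A1 A2 A3.
set D' := interaction_energy b1' b2' b3' A1 A2 A3.
have [D0 | D_neq0] := eqVneq D 0.
  have [A1_0 A2_0 A3_0] :=
    interaction_energy_eq0 b1_gt0 b2_gt0 b3_gt0 A1_ge0 A2_ge0 A3_ge0 D0.
  by rewrite D0 /D' /interaction_energy A1_0 A2_0 A3_0 !mulr0 !addr0 invr0 !mulr0.
have D_gt0 : 0 < D.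
  by rewrite lt_def D_neq0 interaction_energy_ge0 // ltW.
have DD' : D <= c * D' by exact: interaction_energy_le_scale.
have D'_gt0 : 0 < D' by rewrite -(pmulr_rgt0 _ c_gt0) (lt_le_trans D_gt0).
rewrite mulrA ler_pdivrMr // mulrAC ler_pdivlMr // (mulrC c) -mulrA.
exact: ler_wpM2l.
Qed.

Lemma quotients_reweight (b1 b2 b3 q : R) : quotients b1 b2 b3 q ->
  exists N A1 A2 A3 : R,
    q = N / interaction_energy b1 b2 b3 A1 A2 A3 /\
    [/\ 0 <= N, 0 <= A1, 0 <= A2, 0 <= A3
       & forall b1' b2' b3',
           quotients b1' b2' b3' (N / interaction_energy b1' b2' b3' A1 A2 A3)].
Proof.
move=> [a1 [c1 [a2 [c2 [ga1 [ha1 [gc1 [hc1 [ga2 [ha2 [gc2 [hc2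
  [H1 [H2 [H3 [H4 [I1 [I2 qE]]]]]]]]]]]]]]]]]].
do 4 eexists; split; first exact: qE; split.
- by apply: Rintegral_ge0 => x _; rewrite !addr_ge0 // sqr_ge0.
- by apply: Rintegral_ge0 => x _; rewrite sqr_ge0.
- by apply: Rintegral_ge0 => x _; rewrite sqr_ge0.
- by apply: Rintegral_ge0 => x _; rewrite mulr_ge0 // addr_ge0 // sqr_ge0.
- move=> b1' b2' b3'.
  exists a1, c1, a2, c2, ga1, ha1, gc1, hc1, ga2, ha2, gc2, hc2.
  by do 6 (split; first by []).
Qed.

Lemma quotients_ge0 (b1 b2 b3 q : R) : 0 < b1 -> 0 < b2 -> 0 < b3 ->
  quotients b1 b2 b3 q -> 0 <= q.
Proof.
move=> b1_gt0 b2_gt0 b3_gt0 /quotients_reweight[N [A1 [A2 [A3 [-> [? ? ? ? _]]]]]].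
by rewrite divr_ge0 // interaction_energy_ge0 // ltW.
Qed.

Lemma quotients_neq0 (b1 b2 b3 b1' b2' b3' : R) :
  quotients b1 b2 b3 !=set0 -> quotients b1' b2' b3' !=set0.
Proof.
move=> [q /quotients_reweight[N [A1 [A2 [A3 [_ [_ _ _ _ /(_ b1' b2' b3') q']]]]]]].
by eexists; exact: q'.
Qed.

Lemma Ocal_le_scale (b1 b2 b3 b1' b2' b3' c : R) :
  0 < b1 -> 0 < b2 -> 0 < b3 -> 0 < b1' -> 0 < b2' -> 0 < b3' -> 0 < c ->
  b1 <= c * b1' -> b2 <= c * b2' -> b3 <= c * b3' ->
  Ocal b1' b2' b3' <= c * Ocal b1 b2 b3.
Proof.
move=> b1_gt0 b2_gt0 b3_gt0 b1'_gt0 b2'_gt0 b3'_gt0 c_gt0 le1 le2 le3; rewrite /Ocal.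
have [ne | empty] := pselect (quotients b1 b2 b3 !=set0); last first.
  have /nonemptyPn-> : ~ (quotients b1' b2' b3' !=set0).
    by move=> ne'; apply: empty; exact: quotients_neq0 ne'.
  by move/nonemptyPn: empty => ->; rewrite inf0 mulr0.
have lb' : has_lbound (quotients b1' b2' b3').
  by exists 0 => q; apply: quotients_ge0.
rewrite mulrC -ler_pdivrMr //; apply: lb_le_inf => // q.
move=> /quotients_reweight[N [A1 [A2 [A3 [-> [? ? ? ? /(_ b1' b2' b3') q']]]]]].
rewrite ler_pdivrMr // mulrC; apply: le_trans (ge_inf lb' q') _.
exact: rayleigh_le_scale.
Qed.

End RayleighQuotient.

Theorem lemma2p2 (R : realType) (b1 b2 beta : R) :
  0 < b1 -> 0 < b2 -> 0 < beta ->
  exists r : R, 0 < r /\ exists L : R,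
    forall x1 x2 x3 y1 y2 y3 : R,
      0 < x1 -> 0 < x2 -> 0 < x3 -> 0 < y1 -> 0 < y2 -> 0 < y3 ->
      `|x1 - b1| < r -> `|x2 - b2| < r -> `|x3 - beta| < r ->
      `|y1 - b1| < r -> `|y2 - b2| < r -> `|y3 - beta| < r ->
      `|Ocal x1 x2 x3 - Ocal y1 y2 y3| <= L * (`|x1 - y1| + `|x2 - y2| + `|x3 - y3|).
Proof.
exact: (@f_locally_lipschitz R _ (@Ocal_le_scale R)).
Qed.
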